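(* Let $R=[x_1,x_2]\times[y_1,y_2]\subseteq\overline{\mathbb{R}}^2$ be an admissible rectangle and let $A$ be a real function defined on its four corners which is increasing in each variable on the corners, i.e. $A(x_1,y)\leqslant A(x_2,y)$ for $y\in\{y_1,y_2\}$ and $A(x,y_1)\leqslant A(x,y_2)$ for $x\in\{x_1,x_2\}$. Then the bilinear interpolation $A^{\mathrm{BL}}$ of $A$ on $R$ is nondecreasing in each variable on $R$. Moreover, for every subrectangle $R_1=[u_1,u_2]\times[v_1,v_2]\subseteq R$ (with $u_1<u_2$, $v_1<v_2$) we have, writing $V$ for the volume with respect to $A^{\mathrm{BL}}$: (a) $V(R_1)>0$ if and only if $V(R)>0$; (b) $V(R_1)<0$ if and only if $V(R)<0$; (c) $V(R_1)=0$ if and only if $V(R)=0$.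
   Context: $\overline{\mathbb{R}}=\mathbb{R}\cup\{-\infty,\infty\}$. An admissible rectangle is $[x_1,x_2]\times[y_1,y_2]$ with $x_1<x_2$, $y_1<y_2$ in $\overline{\mathbb{R}}$ such that in each coordinate at most one endpoint is infinite, and if $x_1=-\infty$ then $x_2$ is finite with $x_2<0$, if $x_2=\infty$ then $x_1$ is finite with $x_1>0$ (and the same for $y_1,y_2$). (Such rectangles are exactly the cells of a mesh $\delta_x\times\delta_y$ with $\delta_x=\{-\infty=x_0<\dots<x_p=\infty\}$, $\delta_y=\{-\infty=y_0<\dots<y_q=\infty\}$ each containing a finite strictly positive and a finite strictly negative point.) For an interval $[x_1,x_2]$ of this kind define weights $\lambda_1,\lambda_2$ on $[x_1,x_2]$: if $x_1,x_2$ are both finite, $\lambda_2(x)=\frac{x-x_1}{x_2-x_1}$; if $x_1=-\infty$, $\lambda_2(x)=\frac{x_2}{x}$ (equal to $0$ at $x=-\infty$); in these two cases $\lambda_1=1-\lambda_2$; if $x_2=\infty$, $\lambda_1(x)=\frac{x_1}{x}$ (equal to $0$ at $x=\infty$) and $\lambda_2=1-\lambda_1$. Define $\mu_1,\mu_2$ on $[y_1,y_2]$ in the same way. The bilinear interpolation of $A$ is $A^{\mathrm{BL}}(x,y)=\sum_{k,l\in\{1,2\}}\lambda_k(x)\mu_l(y)A(x_k,y_l)$; it is the unique function on $R$ agreeing with $A$ at the corners whose one-dimensional sections parallel to the axes are linear (between two finite endpoints) or linear rational with pole at $0$ (between a finite and an infinite endpoint). The volume of a rectangle $[u_1,u_2]\times[v_1,v_2]$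 with respect to a function $G$ is $V_G=G(u_1,v_1)+G(u_2,v_2)-G(u_2,v_1)-G(u_1,v_2)$. *)

From mathcomp Require Import all_boot all_order all_algebra.
From mathcomp Require Import boolp classical_sets reals constructive_ereal.
Set Implicit Arguments. Unset Strict Implicit. Unset Printing Implicit Defensive.
Import Order.TTheory GRing.Theory Num.Theory.
Local Open Scope ring_scope.
Local Open Scope ereal_scope.

Section Defs.
Variable R : realType.

Definition admissible_interval (a b : \bar R) : Prop :=
  a < b /\
  match a, b with
  | EFin _, EFin _ => True
  | -oo, EFin b' => (b' < 0)%R
  | EFin a', +oo => (0 < a')%R
  | _, _ => False
  end.

Definition admissible_rectangle (x1 x2 y1 y2 : \bar R) : Prop :=
  admissible_interval x1 x2 /\ admissible_interval y1 y2.

(* weight lambda_2 on [a,b] (meaningful for x in [a,b]) *)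
Definition lam2 (a b x : \bar R) : R :=
  match a, b, x with
  | EFin a', EFin b', EFin x' => ((x' - a') / (b' - a'))%R
  | -oo, EFin b', EFin x' => (b' / x')%R
  | -oo, EFin _, -oo => 0%R
  | EFin a', +oo, EFin x' => (1 - a' / x')%R   (* lambda_1 = a/x *)
  | EFin a', +oo, +oo => 1%R
  | _, _, _ => 0%R
  end.

Definition lam1 (a b x : \bar R) : R := (1 - lam2 a b x)%R.

Definition bilinear_interp (x1 x2 y1 y2 : \bar R) (A : \bar R -> \bar R -> R)
  (x y : \bar R) : R :=
  (lam1 x1 x2 x * lam1 y1 y2 y * A x1 y1 +
   lam1 x1 x2 x * lam2 y1 y2 y * A x1 y2 +
   lam2 x1 x2 x * lam1 y1 y2 y * A x2 y1 +
   lam2 x1 x2 x * lam2 y1 y2 y * A x2 y2)%R.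

Definition volume (G : \bar R -> \bar R -> R) (u1 u2 v1 v2 : \bar R) : R :=
  (G u1 v1 + G u2 v2 - G u2 v1 - G u1 v2)%R.

End Defs.

(* The weights reduce everything to the unit square: B x y = P (lam2 x) (lam2 y),
   where P is the bilinear polynomial with the corner values of A, and each lam2
   is strictly increasing on its interval, from 0 at the left end to 1 at the
   right end.  For m in [0,1] the increment of P in its first variable is
   (l' - l) times a convex combination of the horizontal corner increments, hence
   nonnegative, and symmetrically in the second variable.  The volume of P over
   [l1,l2] x [m1,m2] is (l2 - l1) (m2 - m1) times its volume over [0,1]^2, so
   every subrectangle volume of B is a positive multiple of the volume of B
   over R. *)
From mathcomp Require Import all_boot all_order all_algebra.
From mathcomp Require Import boolp classical_sets reals constructive_ereal.
From mathcomp Require Import ring lra.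
Set Implicit Arguments. Unset Strict Implicit. Unset Printing Implicit Defensive.
Import Order.TTheory GRing.Theory Num.Theory.
Local Open Scope ring_scope.

Lemma pmulr_sign (R : numDomainType) (c d : R) : 0 < c ->
  [/\ 0 < c * d <-> 0 < d, c * d < 0 <-> d < 0 & c * d = 0 <-> d = 0].
Proof.
move=> c_gt0; rewrite pmulr_rgt0 // pmulr_rlt0 //; split=> //.
by split=> [/eqP|->]; [rewrite mulf_eq0 gt_eqF // => /eqP | rewrite mulr0].
Qed.

Definition bilinear (R : pzRingType) (a11 a12 a21 a22 l m : R) : R :=
  (1 - l) * (1 - m) * a11 + (1 - l) * m * a12 + l * (1 - m) * a21 + l * m * a22.

Lemma bilinearC (R : comPzRingType) (a11 a12 a21 a22 l m : R) :
  bilinear a11 a12 a21 a22 l m = bilinear a11 a21 a12 a22 m l.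
Proof. rewrite /bilinear; ring. Qed.

Lemma bilinear_volume (R : comPzRingType) (a11 a12 a21 a22 l1 l2 m1 m2 : R) :
  let P := bilinear a11 a12 a21 a22 in
  P l1 m1 + P l2 m2 - P l2 m1 - P l1 m2 =
  (l2 - l1) * (m2 - m1) * (a11 + a22 - a21 - a12).
Proof. rewrite /bilinear; ring. Qed.

Lemma bilinear_le_l (R : realDomainType) (a11 a12 a21 a22 l l' m : R) :
  a11 <= a21 -> a12 <= a22 -> 0 <= m <= 1 -> l <= l' ->
  bilinear a11 a12 a21 a22 l m <= bilinear a11 a12 a21 a22 l' m.
Proof.
move=> le11 le12 /andP[m_ge0 m_le1] le_ll'; rewrite -subr_ge0.
have -> : bilinear a11 a12 a21 a22 l' m - bilinear a11 a12 a21 a22 l m =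
          (l' - l) * ((1 - m) * (a21 - a11) + m * (a22 - a12)).
  by rewrite /bilinear; ring.
rewrite mulr_ge0 ?subr_ge0 //.
by rewrite addr_ge0 // mulr_ge0 // subr_ge0.
Qed.

Lemma bilinear_le_r (R : realDomainType) (a11 a12 a21 a22 l m m' : R) :
  a11 <= a12 -> a21 <= a22 -> 0 <= l <= 1 -> m <= m' ->
  bilinear a11 a12 a21 a22 l m <= bilinear a11 a12 a21 a22 l m'.
Proof. by move=> *; rewrite (bilinearC _ _ _ _ l m) (bilinearC _ _ _ _ l m') bilinear_le_l. Qed.

Section Weights.
Variables (R : realType) (a b : \bar R).
Hypothesis ab : admissible_interval a b.

Lemma lam2_lt (u v : \bar R) : (a <= u)%E -> (u < v)%E -> (v <= b)%E ->
  lam2 a b u < lam2 a b v.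
Proof.
case: a b ab => [a'||] [b'||] [//= ab' b'_cond];
case: u => [u||]; case: v => [v||] => //=; rewrite ?lee_fin ?lte_fin => au uv vb //.
- move: ab'; rewrite lte_fin => ab'.
  by rewrite ltr_pM2r ?invr_gt0 ?subr_gt0 //; lra.
- have [u_gt0 v_gt0] : 0 < u /\ 0 < v by split; lra.
  by rewrite ltrD2l ltrN2 ltr_pM2l // ltf_pV2 ?posrE.
- have : 0 < a' / u by rewrite divr_gt0 //; lra.
  lra.
- have [u_lt0 v_lt0] : u < 0 /\ v < 0 by split; lra.
  by rewrite ltr_nM2l // ltf_nV2 ?negrE.
- by rewrite nmulr_rgt0 // invr_lt0; lra.
Qed.

Lemma lam2_le (u v : \bar R) : (a <= u)%E -> (u <= v)%E -> (v <= b)%E ->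
  lam2 a b u <= lam2 a b v.
Proof.
move=> au; rewrite le_eqVlt => /orP[/eqP -> // | uv] vb.
exact/ltW/lam2_lt.
Qed.

Lemma lam2_left : lam2 a b a = 0.
Proof.
case: a b ab => [a'||] [b'||] [//= ab' b'_cond]; first by rewrite subrr mul0r.
by rewrite divff ?subrr // gt_eqF.
Qed.

Lemma lam2_right : lam2 a b b = 1.
Proof.
case: a b ab => [a'||] [b'||] [//= ab' b'_cond].
  by rewrite divff // subr_eq0 gt_eqF // -lte_fin.
by rewrite divff // lt_eqF.
Qed.

Lemma lam2_ge0_le1 (x : \bar R) : (a <= x)%E -> (x <= b)%E ->
  0 <= lam2 a b x <= 1.
Proof.
have ab_le : (a <= b)%E by case: ab => /ltW.
by move=> ax xb; rewrite -lam2_left -lam2_right !lam2_le.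
Qed.

End Weights.

Lemma bilinear_interpE (R : realType) (x1 x2 y1 y2 : \bar R)
    (A : \bar R -> \bar R -> R) (x y : \bar R) :
  bilinear_interp x1 x2 y1 y2 A x y =
  bilinear (A x1 y1) (A x1 y2) (A x2 y1) (A x2 y2)
           (lam2 x1 x2 x) (lam2 y1 y2 y).
Proof. by []. Qed.

Lemma volume_bilinear_interp (R : realType) (x1 x2 y1 y2 : \bar R)
    (A : \bar R -> \bar R -> R) (u1 u2 v1 v2 : \bar R) :
  admissible_rectangle x1 x2 y1 y2 ->
  let B := bilinear_interp x1 x2 y1 y2 A in
  volume B u1 u2 v1 v2 =
  (lam2 x1 x2 u2 - lam2 x1 x2 u1) * (lam2 y1 y2 v2 - lam2 y1 y2 v1) *
  volume B x1 x2 y1 y2.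
Proof.
move=> [x_adm y_adm] B; rewrite /volume /B !bilinear_interpE !bilinear_volume.
by rewrite !lam2_left ?lam2_right // !subr0 !mul1r.
Qed.

Theorem corollary2 (R : realType) (x1 x2 y1 y2 : \bar R)
  (A : \bar R -> \bar R -> R) :
  admissible_rectangle x1 x2 y1 y2 ->
  A x1 y1 <= A x2 y1 -> A x1 y2 <= A x2 y2 ->
  A x1 y1 <= A x1 y2 -> A x2 y1 <= A x2 y2 ->
  let B := bilinear_interp x1 x2 y1 y2 A in
  (forall y u v : \bar R, (y1 <= y)%E -> (y <= y2)%E ->
     (x1 <= u)%E -> (u <= v)%E -> (v <= x2)%E -> B u y <= B v y) /\
  (forall x u v : \bar R, (x1 <= x)%E -> (x <= x2)%E ->
     (y1 <= u)%E -> (u <= v)%E -> (v <= y2)%E -> B x u <= B x v) /\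
  (forall u1 u2 v1 v2 : \bar R,
     (x1 <= u1)%E -> (u1 < u2)%E -> (u2 <= x2)%E ->
     (y1 <= v1)%E -> (v1 < v2)%E -> (v2 <= y2)%E ->
     [/\ 0 < volume B u1 u2 v1 v2 <-> 0 < volume B x1 x2 y1 y2,
         volume B u1 u2 v1 v2 < 0 <-> volume B x1 x2 y1 y2 < 0 &
         volume B u1 u2 v1 v2 = 0 <-> volume B x1 x2 y1 y2 = 0]).
Proof.
move=> R_adm le_x11 le_x22 le_y11 le_y22 B; have [x_adm y_adm] := R_adm.
split; [|split].
- move=> y u v y1y yy2 x1u uv vx2; rewrite /B !bilinear_interpE.
  by apply: bilinear_le_l; rewrite ?lam2_ge0_le1 ?lam2_le.
- move=> x u v x1x xx2 y1u uv vy2; rewrite /B !bilinear_interpE.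
  by apply: bilinear_le_r; rewrite ?lam2_ge0_le1 ?lam2_le.
- move=> u1 u2 v1 v2 x1u1 u12 u2x2 y1v1 v12 v2y2.
  rewrite /B volume_bilinear_interp //; apply: pmulr_sign.
  by rewrite mulr_gt0 // subr_gt0 lam2_lt.
Qed.
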